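(* If $\phi$ is an automorphism of $\infty\mathbin{\hat{*}} I_\infty$ which fixes each maximal antichain setwise, then $\phi$ is the identity.
   Context: A digraph is a set with an irreflexive asymmetric edge relation $\to$; $x\perp y$ means no edge between $x,y$. A digraph is complete multipartite if $\perp$ (taken reflexively) is an equivalence relation; its classes are the maximal antichains. Let $\mathcal C$ be the class of finite complete multipartite digraphs with the parity property: for every two distinct maximal antichains $A,B$, distinct $a,a'\in A$ and distinct $b,b'\in B$, there is an even number of edges pointing from $\{a,a'\}$ to $\{b,b'\}$. $\mathcal C$ is an amalgamation class, and $\infty\mathbin{\hat{*}} I_\infty$ denotes its Fraïssé limit, the countable homogeneous digraph whose finite induced substructures are exactly the members of $\mathcal C$. *)

From mathcomp Require Import all_boot.
Set Implicit Arguments. Unset Strict Implicit. Unset Printing Implicit Defensive.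

Definition is_digraph (V : Type) (e : rel V) : Prop :=
  (forall x, ~~ e x x) /\ (forall x y, e x y -> ~~ e y x).

Definition perp (V : Type) (e : rel V) (x y : V) : bool := ~~ e x y && ~~ e y x.

(* Complete multipartite: _|_ (taken reflexively) is an equivalence relation;
   it is reflexive and symmetric by definition, so it remains to ask transitivity. *)
Definition complete_multipartite (V : Type) (e : rel V) : Prop :=
  forall x y z, perp e x y -> perp e y z -> perp e x z.

Definition edges_between (V : Type) (e : rel V) (a a' b b' : V) : nat :=
  e a b + e a b' + e a' b + e a' b'.

(* Parity property: for two distinct maximal antichains A, B (= two distinct
   _|_-classes), distinct a,a' in A and distinct b,b' in B, an even number of
   edges point from {a,a'} to {b,b'}. *)
Definition parity_property (V : eqType) (e : rel V) : Prop :=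
  forall a a' b b' : V,
    a != a' -> b != b' -> perp e a a' -> perp e b b' -> ~~ perp e a b ->
    ~~ odd (edges_between e a a' b b').

Definition in_C (T : finType) (e : rel T) : Prop :=
  [/\ is_digraph e, complete_multipartite e & parity_property e].

Definition pullback (V : Type) (e : rel V) (n : nat) (f : 'I_n -> V) : rel 'I_n :=
  fun i j => e (f i) (f j).

Definition countable_type (V : Type) : Prop :=
  exists c : V -> nat, injective c.

Definition is_automorphism (V : Type) (e : rel V) (phi : V -> V) : Prop :=
  bijective phi /\ forall x y, e (phi x) (phi y) = e x y.

Definition age_is_C (V : Type) (e : rel V) : Prop :=
  (forall (n : nat) (f : 'I_n -> V), injective f -> in_C (pullback e f)) /\
  (forall (n : nat) (r : rel 'I_n), in_C r ->
     exists f : 'I_n -> V, injective f /\ forall i j, e (f i) (f j) = r i j).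

Definition homogeneous (V : Type) (e : rel V) : Prop :=
  forall (n : nat) (f g : 'I_n -> V), injective f -> injective g ->
    (forall i j, e (f i) (f j) = e (g i) (g j)) ->
    exists phi, is_automorphism e phi /\ forall i, phi (f i) = g i.

Definition is_fraisse_limit_C (V : Type) (e : rel V) : Prop :=
  [/\ countable_type V, is_digraph e, homogeneous e & age_is_C e].

Definition antichain (V : Type) (e : rel V) (A : V -> Prop) : Prop :=
  forall x y, A x -> A y -> ~~ e x y.

Definition maximal_antichain (V : Type) (e : rel V) (A : V -> Prop) : Prop :=
  antichain e A /\
  forall B : V -> Prop, antichain e B -> (forall x, A x -> B x) -> forall x, B x -> A x.

Definition fixes_setwise (V : Type) (phi : V -> V) (A : V -> Prop) : Prop :=
  (forall x, A x -> A (phi x)) /\ (forall y, A y -> exists x, A x /\ phi x = y).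

From mathcomp Require Import all_boot.
From mathcomp Require Import boolp.

Set Implicit Arguments.
Unset Strict Implicit.
Unset Printing Implicit Defensive.

(* An automorphism phi fixing every _|_-class moves each vertex inside its class.
   For a1, a2 in a class A and b outside it, the parity property applied to
   {phi a1, phi a2} and {b, phi b} shows that the defect e (phi a) b (+) e a b
   does not depend on a in A.  If phi x <> x, the extension property of the
   homogeneous structure yields z in A with z <> x <> phi z, and then b outside A
   receiving an edge from x but from none of phi x, z, phi z: the defect is 1 at
   x and 0 at z. *)

(* ord_max is the apex, in its own class: i -> apex if P i, apex -> i otherwise. *)
Definition apex_rel n (P : 'I_n -> bool) : rel 'I_n.+1 := fun i j =>
  match unlift ord_max i, unlift ord_max j with
  | Some i', None => P i'
  | None, Some j' => ~~ P j'
  | _, _ => false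
  end.

Lemma lift_max_neq n (i : 'I_n) : (lift ord_max i == ord_max) = false.
Proof. by rewrite eq_sym (negbTE (neq_lift _ _)). Qed.

Lemma perp_apex_rel n (P : 'I_n -> bool) i j :
  perp (apex_rel P) i j = ((i == ord_max) == (j == ord_max)).
Proof.
rewrite /perp /apex_rel.
by case: unliftP => [i' ->|->]; case: unliftP => [j' ->|->];
  rewrite ?lift_max_neq ?eqxx //=; case: (P _).
Qed.

Lemma apex_rel_in_C n (P : 'I_n -> bool) : in_C (apex_rel P).
Proof.
have old k k' : k != k' -> (k == ord_max) == (k' == ord_max) ->
    (k == ord_max :> 'I_n.+1) = false.
  by case: (k =P ord_max) => [-> | //]; rewrite eq_sym => /negbTE ->.
split.
- split=> [i | i j]; rewrite /apex_rel.
    by case: unliftP.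
  by case: unliftP => [i' _|_]; case: unliftP => [j' _|_] //; rewrite negbK.
- by move=> i j k; rewrite !perp_apex_rel => /eqP -> /eqP ->.
- move=> a a' b b' naa' nbb'; rewrite !perp_apex_rel => paa' pbb'.
  by rewrite (old _ _ naa' paa') (old _ _ nbb' pbb').
Qed.

Section FraisseLimit.

Variables (V : eqType) (e : rel V).

Lemma perp_sym x y : perp e x y = perp e y x.
Proof. by rewrite /perp andbC. Qed.

Lemma perp_refl x : is_digraph e -> perp e x x.
Proof. by case=> irr _; rewrite /perp irr. Qed.

Hypotheses (digraph : is_digraph e) (age : age_is_C e).

Lemma perp_trans y x z : perp e x y -> perp e y z -> perp e x z.
Proof.
have [-> //|nxy] := eqVneq x y; have [<- //|nyz] := eqVneq y z.
have [<- _ _|nxz] := eqVneq x z; first exact: perp_refl.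
have xyz_inj : injective (tnth [tuple x; y; z]).
  by apply/tuple_uniqP; rewrite /= !inE negb_or nxy nxz nyz.
have [_ trans _] := age.1 _ _ xyz_inj.
exact: (trans (@Ordinal 3 0 isT) (@Ordinal 3 1 isT) (@Ordinal 3 2 isT)).
Qed.

Lemma perp_in_class x u v : perp e x u -> perp e x v -> perp e u v.
Proof. by rewrite perp_sym; apply: perp_trans. Qed.

Lemma perp_classes_parity a a' b b' :
  a != a' -> b != b' -> perp e a a' -> perp e b b' -> ~~ perp e a b ->
  ~~ odd (edges_between e a a' b b').
Proof.
move=> naa' nbb' paa' pbb' npab.
have npab' : ~~ perp e a b'.
  by apply: contra npab => /perp_trans; apply; rewrite perp_sym.
have outside u v : perp e a u -> ~~ perp e a v -> u != v.
  by move=> pau; apply: contraNneq => <-.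
have quad_inj : injective (tnth [tuple a; a'; b; b']).
  apply/tuple_uniqP; rewrite /= !inE !negb_or naa' nbb'.
  by rewrite !outside ?perp_refl.
have [_ _ parity] := age.1 _ _ quad_inj.
exact: (parity (@Ordinal 4 0 isT) (@Ordinal 4 1 isT)
                (@Ordinal 4 2 isT) (@Ordinal 4 3 isT)).
Qed.

Lemma perp_class_pairwise x (s : seq V) :
  {in s, forall u, perp e x u} -> {in s &, forall u v, perp e u v}.
Proof. by move=> xs u v /xs xu /xs xv; apply: perp_in_class xu xv. Qed.

Lemma maximal_antichain_perp_class x : maximal_antichain e (perp e x).
Proof.
split=> [u v xu xv | B antiB sub u Bu].
  by have /andP[] := perp_in_class xu xv.
have Bx := sub x (perp_refl x digraph).
by rewrite /perp !antiB.
Qed.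

Hypothesis homog : homogeneous e.

Lemma homogeneous_one_point_extension n (g : 'I_n -> V) (r : rel 'I_n.+1) :
  injective g -> in_C r ->
  (forall i j, r (lift ord_max i) (lift ord_max j) = e (g i) (g j)) ->
  exists h : 'I_n.+1 -> V, [/\ injective h, forall i, h (lift ord_max i) = g i
                             & forall i j, e (h i) (h j) = r i j].
Proof.
move=> g_inj rC r_g.
have [F [F_inj FE]] := age.2 _ _ rC.
have [|psi [[psi_bij psiE] psiF]] :=
  @homog n (F \o lift ord_max) g (inj_comp F_inj (@lift_inj _ _)) g_inj.
  by move=> i j; rewrite /= FE r_g.
exists (psi \o F); split=> [||i j] /=.
- exact: inj_comp (bij_inj psi_bij) F_inj.
- exact: psiF.
- by rewrite psiE FE.
Qed.

Lemma exists_apex (s : seq V) (P : pred V) :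
  uniq s -> {in s &, forall u v, perp e u v} ->
  exists b, {in s, forall u, e u b = P u}.
Proof.
move=> s_uniq s_perp; pose t := in_tuple s.
have t_inj : injective (tnth t) by apply/tuple_uniqP.
have [|h [_ h_lift h_e]] :=
  homogeneous_one_point_extension t_inj (apex_rel_in_C (P \o tnth t)).
  move=> i j; rewrite /apex_rel !liftK.
  by have /andP[/negbTE -> _] := s_perp _ _ (mem_tnth i t) (mem_tnth j t).
exists (h ord_max) => _ /(tnthP t)[i ->].
by rewrite -h_lift h_e /apex_rel liftK unlift_none h_lift.
Qed.

Lemma exists_perp_fresh (s : seq V) :
  uniq s -> {in s &, forall u v, perp e u v} ->
  exists z, z \notin s /\ {in s, forall u, perp e u z}.
Proof.
move=> s_uniq s_perp; pose t := in_tuple s.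
have t_inj : injective (tnth t) by apply/tuple_uniqP.
have emptyC : in_C (fun _ _ : 'I_(size s).+1 => false) by [].
have [|h [h_inj h_lift h_e]] :=
  homogeneous_one_point_extension t_inj emptyC.
  move=> i j.
  by have /andP[/negbTE -> _] := s_perp _ _ (mem_tnth i t) (mem_tnth j t).
exists (h ord_max); split=> [|_ /(tnthP t)[i ->]].
  by apply/(tnthP t)=> -[i]; rewrite -h_lift => /h_inj/eqP; apply/negP/neq_lift.
by rewrite /perp -h_lift !h_e.
Qed.

Section Automorphism.

Variable phi : V -> V.
Hypotheses (phi_aut : is_automorphism e phi)
           (phi_class : forall x, perp e x (phi x)).

Lemma aut_edge_defect_class_invariant a1 a2 b :
  perp e a1 a2 -> ~~ perp e a1 b ->
  e (phi a1) b (+) e a1 b = e (phi a2) b (+) e a2 b.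
Proof.
move=> p12 n1b; have [phi_bij phiE] := phi_aut.
have [fixb|movb] := eqVneq b (phi b).
  have fixed a : e (phi a) b = e a b by rewrite [in LHS]fixb phiE.
  by rewrite !fixed !addbb.
have [<- //|n12] := eqVneq a1 a2.
have pphi12 : perp e (phi a1) (phi a2).
  by apply: perp_in_class (phi_class a1) _; apply: perp_trans (phi_class a2).
have nphi1b : ~~ perp e (phi a1) b by apply: contra n1b; apply: perp_trans.
have nphi12 : phi a1 != phi a2 by rewrite (inj_eq (bij_inj phi_bij)).
have := perp_classes_parity nphi12 movb pphi12 (phi_class b) nphi1b.
by rewrite /edges_between !phiE !oddD !oddb; do 4!case: (e _ _).
Qed.

Lemma aut_fixing_classes_id x : phi x = x.
Proof.
have [phi_bij phiE] := phi_aut; have phi_inj := bij_inj phi_bij.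
have [// | moved] := eqVneq (phi x) x; exfalso.
have [psi _ psiK] := phi_bij; set y := psi x; have phiy : phi y = x := psiK x.
have xy : perp e x y by rewrite perp_sym -[X in perp e y X]phiy phi_class.
have nxy : x != y by apply: (contraNneq _ moved) => exy; rewrite {1}exy phiy.
have [z [zxy xz]] : exists z, z \notin [:: x; y] /\ {in [:: x; y], forall u, perp e u z}.
  apply: exists_perp_fresh; first by rewrite /= inE nxy.
  by apply: (@perp_class_pairwise x) => u; rewrite !inE => /orP[]/eqP->; rewrite ?perp_refl.
have {}xz := xz x (mem_head _ _).
have nzx : z != x by apply: contraNneq zxy => ->; rewrite mem_head.
have nphizx : phi z != x.
  by rewrite -phiy (inj_eq phi_inj); apply: contraNneq zxy => ->; rewrite !inE eqxx orbT.
have [b eb] : exists b, {in undup [:: x; phi x; z; phi z], forall u, e u b = (u == x)}.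
  apply: exists_apex; first exact: undup_uniq.
  apply: (@perp_class_pairwise x) => u; rewrite mem_undup !inE.
  by case/or4P=> /eqP->; rewrite ?perp_refl ?phi_class //; apply: perp_trans (phi_class z).
have {}eb u : u \in [:: x; phi x; z; phi z] -> e u b = (u == x).
  by rewrite -mem_undup; apply: eb.
have := aut_edge_defect_class_invariant xz (b:=b).
rewrite !eb ?inE ?eqxx ?orbT // (negbTE moved) (negbTE nzx) (negbTE nphizx).
have xb : ~~ perp e x b by rewrite /perp eb ?inE ?eqxx.
by move=> /(_ xb).
Qed.

End Automorphism.

End FraisseLimit.

Theorem proposition4p3 (V : Type) (e : rel V) (phi : V -> V) :
  is_fraisse_limit_C e ->
  is_automorphism e phi ->
  (forall A : V -> Prop, maximal_antichain e A -> fixes_setwise phi A) ->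
  forall x, phi x = x.
Proof.
move=> [_ digraph homog age] phi_aut fixes.
have phi_class v : perp e v (phi v).
  have [maps_in _] := fixes _ (maximal_antichain_perp_class (V := {classic V}) digraph age v).
  exact/maps_in/perp_refl.
exact: (aut_fixing_classes_id (V := {classic V}) digraph age homog phi_aut phi_class).
Qed.
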